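(* Let $q$ be a prime power, $n\ge 1$, and $t$ transcendental over $\mathbb{F}_q$. Let $L(x)\in\mathbb{F}_q[x]$ be a monic $q$-polynomial of $q$-degree $n$. Then $(L(x)+tx)/x$ is irreducible over $\mathbb{F}_q(t)$; consequently $q^n-1$ divides the order of the Galois group of $L(x)+tx$ over $\mathbb{F}_q(t)$.
   Context: A $q$-polynomial over a field $F\supseteq\mathbb{F}_q$ is a polynomial of the form $a_0x+a_1x^q+\cdots+a_nx^{q^n}\in F[x]$; if $a_n\neq 0$ its $q$-degree is $n$. *)

From HB Require Import structures.
From mathcomp Require Import all_boot all_order all_algebra all_fingroup all_field.
From mathcomp Require Import fraction.
Set Implicit Arguments. Unset Strict Implicit. Unset Printing Implicit Defensive.
Import GRing.Theory.
Local Open Scope ring_scope.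

(* F_q(t): the rational function field in the transcendental t over F. *)
Definition ratfun (F : fieldType) := {fraction {poly F}}.

Definition tvar (F : fieldType) : ratfun F := tofrac 'X.

Definition cst (F : fieldType) (c : F) : ratfun F := tofrac c%:P.

(* p is a q-polynomial: only monomials x^(q^i) occur (so no constant term) *)
Definition is_qpoly (F : fieldType) (q : nat) (p : {poly F}) : Prop :=
  forall i : nat, p`_i != 0 -> exists k : nat, i = (q ^ k)%N.

(* q-degree of a nonzero q-polynomial is n iff its degree is q^n *)
Definition has_qdeg (F : fieldType) (q : nat) (p : {poly F}) (n : nat) : Prop :=
  size p = (q ^ n).+1.

Definition Lt (F : fieldType) (L : {poly F}) : {poly ratfun F} :=
  map_poly (@cst F) L + (tvar F)%:P * 'X.

From HB Require Import structures.
From mathcomp Require Import all_boot all_order all_algebra all_fingroup all_field.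
From mathcomp Require Import fraction.
From mathcomp Require Import cyclic generic_quotient polyXY ring.
Set Implicit Arguments.
Unset Strict Implicit.
Unset Printing Implicit Defensive.

Import GRing.Theory FinRing.Theory.
Local Open Scope ring_scope.
Local Open Scope quotient_scope.

(* Write L(x) = x f(x).  Then L(x) + t x = x (f(x) + t), and f(x) + t is linear
   and monic in t, hence irreducible in F[t][x] (a factorisation would give a
   factor vanishing at t = -f(x)); by Gauss it stays irreducible over F(t).  As
   L is additive, L' = L_1 is constant, so (L + t x)' = L_1 + t is a nonzero
   constant and L + t x is separable: its splitting field E is Galois over F(t).
   A root of f + t generates a subfield of E of degree deg f = q^n - 1, which
   thus divides [E : F(t)] = |Gal(E / F(t))|. *)

Lemma mul_eq_const_size1 (R : idomainType) (G Q : {poly R}) (d : R) :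
  d != 0 -> G * Q = d%:P -> (size G <= 1)%N.
Proof.
move=> dn0 eGQ; have dP : d%:P != 0 by rewrite polyC_eq0.
have Qn0 : Q != 0 by apply: contraNneq dP => Q0; rewrite -eGQ Q0 mulr0.
have Gn0 : G != 0 by apply: contraNneq dP => G0; rewrite -eGQ G0 mul0r.
have := size_mul Gn0 Qn0; rewrite eGQ size_polyC dn0.
move: Qn0; rewrite -size_poly_gt0; case: (size Q) => [|m] // _.
by rewrite addnS /= => ->; apply: leq_addr.
Qed.

Section LinearInY.

Variables (R : idomainType) (f : {poly R}).

Local Notation P0 := (f^:P + 'Y).

Lemma swapXY_addY : swapXY P0 = 'X - (- f)%:P.
Proof. by rewrite rmorphD /= swapXY_map_polyC swapXY_Y polyCN opprK addrC. Qed.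

Lemma addY_neq0 : P0 != 0.
Proof. by rewrite -swapXY_eq0 swapXY_addY -size_poly_eq0 size_XsubC. Qed.

Lemma addY_dvd_of_evalY (u : {poly {poly R}}) :
  (swapXY u).[- f] = 0 -> exists Q, u = Q * P0.
Proof.
move=> /eqP u_root; have /factor_theorem [Q eQ] : root (swapXY u) (- f) by [].
by exists (swapXY Q); rewrite -[u]swapXYK eQ rmorphM /= -swapXY_addY swapXYK.
Qed.

Lemma factor_scale_addY (G H : {poly {poly R}}) (d : {poly R}) :
  d != 0 -> G * H = d%:P * P0 -> (size G <= 1)%N \/ (size H <= 1)%N.
Proof.
move=> dn0 eGH; pose ev u := (swapXY u).[- f].
have evM u v : ev (u * v) = ev u * ev v by rewrite /ev rmorphM hornerM.
have : ev G * ev H = 0 by rewrite -evM eGH evM /ev swapXY_addY hornerXsubC subrr mulr0.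
move/eqP; rewrite mulf_eq0 => /orP[/eqP/addY_dvd_of_evalY[Q eQ]|/eqP/addY_dvd_of_evalY[Q eQ]].
- right; apply: (mul_eq_const_size1 (Q := Q) dn0).
  by apply: (mulIf addY_neq0); rewrite -mulrA -eQ mulrC eGH.
- left; apply: (mul_eq_const_size1 (Q := Q) dn0).
  by apply: (mulIf addY_neq0); rewrite -mulrA -eQ eGH.
Qed.

End LinearInY.

Section ClearDenominators.

Variable R : idomainType.

Lemma tofrac_inj : injective (@tofrac R).
Proof. by move=> x y /eqP; rewrite tofrac_eq => /eqP. Qed.

Lemma fraction_clear_denom (x : {fraction R}) :
  exists a b, b != 0 /\ x * tofrac b = tofrac a.
Proof.
elim/quotW: x => r; exists \n_r, \d_r; split; first exact: denom_ratioP.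
have piE y : tofrac y = \pi_({fraction R}) (Ratio y 1).
  by rewrite /tofrac /= /FracField.tofrac; unlock.
rewrite !piE -[_ * _]FracField.pi_mul.
apply/eqmodP; rewrite /= FracField.equivfE /FracField.mulf /=.
by rewrite !numden_Ratio ?mulf_neq0 ?oner_neq0 ?denom_ratioP // !mulr1 mulrC.
Qed.

Lemma poly_fraction_clear_denom (A : {poly {fraction R}}) :
  exists d (A' : {poly R}), d != 0 /\ tofrac d *: A = map_poly (@tofrac R) A'.
Proof.
elim/poly_ind: A => [|A c [d [A' [dn0 eA]]]].
  by exists 1, 0; rewrite oner_neq0 scaler0 rmorph0.
have [a [b [bn0 eb]]] := fraction_clear_denom c.
exists (d * b), (A' * b%:P * 'X + (d * a)%:P); split; first by rewrite mulf_neq0.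
rewrite rmorphD rmorphM rmorphM /= map_polyX !map_polyC /= -eA rmorphM /= tofracM -eb.
by rewrite scalerDr -!mul_polyC !polyCM; ring.
Qed.

Lemma size_scale_tofrac (A : {poly {fraction R}}) d (A' : {poly R}) :
  d != 0 -> tofrac d *: A = map_poly (@tofrac R) A' -> size A' = size A.
Proof.
move=> dn0 eA; rewrite -(size_map_inj_poly tofrac_inj (rmorph0 _)) -eA.
by rewrite size_scale ?tofrac_eq0.
Qed.

End ClearDenominators.

Lemma irreducible_tofrac_addY (R : idomainType) (f : {poly R}) :
  (1 < size f)%N -> irreducible_poly (map_poly (@tofrac _) (f^:P + 'Y)).
Proof.
move=> sf; set P := map_poly _ _.
have sP : size P = size f.
  rewrite size_map_inj_poly ?rmorph0 //; last exact: tofrac_inj.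
  by rewrite size_polyDl size_map_polyC // size_polyC polyX_eq0.
have Pn0 : P != 0 by rewrite -size_poly_eq0 sP -lt0n ltnW.
split=> [|G sG GP]; first by rewrite sP.
have Gn0 : G != 0 by apply: contraNneq Pn0 => G0; move: GP; rewrite G0 dvd0p.
set H := P %/ G; have eP : P = H * G by rewrite divpK.
have Hn0 : H != 0 by apply: contraNneq Pn0 => H0; rewrite eP H0 mul0r.
have [sH1|sH1] := eqVneq (size H) 1%N.
  have /size1_polyC eH : (size H <= 1)%N by rewrite sH1.
  have cn0 : H`_0 != 0 by rewrite -polyC_eq0 -eH.
  by rewrite eP eH mul_polyC eqp_sym eqp_scale.
have [dG [G' [dGn0 eG]]] := poly_fraction_clear_denom G.
have [dH [H' [dHn0 eH]]] := poly_fraction_clear_denom H.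
have eGH : G' * H' = (dG * dH)%:P * (f^:P + 'Y).
  apply: (map_inj_poly (@tofrac_inj _) (rmorph0 _)).
  rewrite [LHS]rmorphM [RHS]rmorphM /= -eG -eH map_polyC /= tofracM -/P eP.
  by rewrite -scalerAl -scalerAr scalerA mul_polyC [H * G]mulrC.
have := factor_scale_addY (mulf_neq0 dGn0 dHn0) eGH.
rewrite (size_scale_tofrac dGn0 eG) (size_scale_tofrac dHn0 eH).
move: sG sH1 Gn0 Hn0; rewrite -!size_poly_eq0.
by case: (size G) => [|[|m]] // _; case: (size H) => [|[|k]] // _ _ _ [].
Qed.

Section LtFactor.

Variables (F : fieldType) (L : {poly F}).

Lemma map_cst_tofrac : map_poly (@cst F) L = map_poly (@tofrac _) L^:P.
Proof.
apply/polyP=> i; rewrite coef_map_id0; last by rewrite /cst polyC0 rmorph0.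
by rewrite !coef_map.
Qed.

Hypothesis L0 : L`_0 = 0.

Lemma Lt_factorX : Lt L = map_poly (@tofrac _) ((L %/ 'X)^:P + 'Y) * 'X.
Proof.
have eL : L = L %/ 'X * 'X.
  by rewrite divpK // -['X]subr0 -polyC0 dvdp_XsubCl /root horner_coef0 L0.
rewrite /Lt map_cst_tofrac [in LHS]eL !rmorphM /= !map_polyX.
by rewrite rmorphD /= map_polyC mulrDl.
Qed.

Lemma Lt_divX : Lt L %/ 'X = map_poly (@tofrac _) ((L %/ 'X)^:P + 'Y).
Proof. by rewrite Lt_factorX mulpK ?polyX_eq0. Qed.

Hypothesis sL : (2 < size L)%N.

Lemma size_divX_gt1 : (1 < size (L %/ 'X)%R)%N.
Proof.
by rewrite size_divp ?polyX_eq0 // size_polyX subn1; case: (size L) sL => [|[|[|]]].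
Qed.

Lemma size_Lt_divX : size (Lt L %/ 'X) = (size L).-1.
Proof.
rewrite Lt_divX size_map_inj_poly ?rmorph0 //; last exact: tofrac_inj.
rewrite size_polyDl size_map_polyC; last by rewrite size_polyC polyX_eq0 size_divX_gt1.
by rewrite size_divp ?polyX_eq0 // size_polyX subn1.
Qed.

Lemma irreducible_Lt_divX : irreducible_poly (Lt L %/ 'X).
Proof. by rewrite Lt_divX; apply: irreducible_tofrac_addY; apply: size_divX_gt1. Qed.

End LtFactor.

Section QPolynomials.

Variable F : finFieldType.
Local Notation q := #|F|.

Lemma natr_card_expn k : (0 < k)%N -> (q ^ k)%:R = 0 :> F.
Proof.
case: k => // k _; rewrite expnS natrM.
have := @expg_cardG _ [set: F] (GRing.one F) (in_setT _).
by rewrite cardsT zmodXgE => ->; rewrite mul0r.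
Qed.

Lemma qpoly_coef0 (L : {poly F}) : is_qpoly q L -> L`_0 = 0.
Proof.
move=> hq; apply/eqP/negPn/negP => /hq [k ek].
by move: (expn_gt0 q k); rewrite -ek ltnn; case: (q) (finNzRing_gt1 F).
Qed.

Lemma deriv_qpoly (L : {poly F}) : is_qpoly q L -> L^`() = (L`_1)%:P.
Proof.
move=> hq; apply/polyP => -[|i]; rewrite coef_deriv coefC /=; first by rewrite mulr1n.
have [->|/hq [[|k] ek]] := eqVneq L`_i.+2 0; first by rewrite mul0rn.
  by rewrite expn0 in ek.
by rewrite -mulr_natr ek natr_card_expn // mulr0.
Qed.

Lemma separable_Lt (L : {poly F}) : is_qpoly q L -> separable_poly (Lt L).
Proof.
move=> hq; have dLt : (Lt L)^`() = (tofrac ((L`_1)%:P + 'X))%:P.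
  rewrite /Lt derivD map_cst_tofrac !deriv_map deriv_qpoly // !map_polyC /=.
  by rewrite mul_polyC derivZ derivX alg_polyC tofracD polyCD.
rewrite unlock dLt -alg_polyC coprimepZr ?coprimep1 //.
by rewrite tofrac_eq0 addrC -size_poly_eq0 size_XaddC.
Qed.

End QPolynomials.

Lemma splitting_field_root_factor (F0 : fieldType) (K : fieldExtType F0)
    (U E : {vspace K}) (p P : {poly K}) :
  splittingFieldFor U p E -> P %| p -> (1 < size P)%N ->
  exists2 r, r \in E & root P r.
Proof.
move=> [rs hrs <-{E}] Pp sP.
have /dvdp_prod_XsubC [m hm] : P %| \prod_(z <- rs) ('X - z%:P).
  by rewrite -(eqp_dvdr _ hrs).
move: hm; case em: (mask m rs) => [|r s] hm.
  by move: (eqp_size hm); rewrite big_nil size_poly1 => e; rewrite e in sP.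
exists r; last by rewrite (eqp_root hm) root_prod_XsubC mem_head.
by apply: seqv_sub_adjoin; apply: (@mem_mask _ _ m); rewrite em mem_head.
Qed.

Lemma card_gal_dvd_irreducible_factor (F0 : fieldType) (K : splittingFieldType F0)
    (E : {subfield K}) (p P : {poly F0}) :
  separable_poly p -> irreducible_poly P -> P %| p ->
  splittingFieldFor 1%VS (map_poly (in_alg K) p) E ->
  ((size P).-1 %| #|('Gal(E / 1%VS))%g|)%N.
Proof.
move=> sep_p irrP Pp hE.
have galE : galois 1 E.
  apply/splitting_galoisField; exists (map_poly (in_alg K) p); split => //.
    by apply/polyOver1P; exists p.
  by rewrite separable_map.
have [r rE rootr] : exists2 r, r \in E & root (map_poly (in_alg K) P) r.
  apply: (splitting_field_root_factor hE); first by rewrite dvdp_map.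
  by rewrite size_map_poly; case: irrP.
have size_minr : size (minPoly 1 r) = size P.
  have /polyOver1P [m em] := minPolyOver 1 r.
  have mP : m %| P.
    by rewrite -(dvdp_map (in_alg K)) -em minPoly_dvdp //; apply/polyOver1P; exists P.
  have sm : size m != 1%N by rewrite -(size_map_poly (in_alg K)) -em size_minPoly.
  by rewrite em size_map_poly; apply: eqp_size; apply: irrP.2.
have : (\dim <<1; r>> %| \dim E)%N.
  by apply: field_dimS; apply/FadjoinP; split => //; apply: sub1v.
by rewrite dim_Fadjoin dimv1 muln1 -size_minr size_minPoly -galois_dim // dimv1 divn1.
Qed.

Theorem mainTheorem7 (F : finFieldType) (n : nat) (L : {poly F}) :
  (1 <= n)%N ->
  is_qpoly #|F| L -> has_qdeg #|F| L n -> L \is monic ->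
  irreducible_poly (Lt L %/ 'X) /\
  (forall (K : splittingFieldType (ratfun F)) (E : {subfield K}),
     splittingFieldFor 1%VS (map_poly (in_alg K) (Lt L)) E ->
     ((#|F| ^ n).-1 %| #|('Gal(E / 1%VS))%g|)%N).
Proof.
move=> n_gt0 hq hdeg _.
have L0 := qpoly_coef0 hq.
have sL : (2 < size L)%N.
  rewrite hdeg ltnS (leq_trans (finNzRing_gt1 F)) //.
  by rewrite -{1}(expn1 #|F|) leq_pexp2l // ltnW // finNzRing_gt1.
split=> [|K E hE]; first exact: irreducible_Lt_divX.
have := card_gal_dvd_irreducible_factor (separable_Lt hq)
  (irreducible_Lt_divX L0 sL) _ hE.
rewrite size_Lt_divX // hdeg /=; apply.
by rewrite [X in _ %| X](Lt_factorX L0) Lt_divX // dvdp_mulr.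
Qed.
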